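(* Let $\mathcal{C}$ be a strict monoidal category with a pre-braiding $\sigma$, and let $\mathcal{C}_\sigma$ be the subcategory defined below. Then $\mathcal{C}_\sigma$ is a braided monoidal category with braiding $\sigma$.
   Context: A pre-braiding is a family of morphisms $\sigma_{A,B}\colon A\otimes B\to B\otimes A$, $A,B\in\mathrm{Ob}\,\mathcal{C}$, satisfying the Yang–Baxter equation $(\mathrm{id}_C\otimes\sigma_{A,B})(\sigma_{A,C}\otimes\mathrm{id}_B)(\mathrm{id}_A\otimes\sigma_{B,C})=(\sigma_{B,C}\otimes\mathrm{id}_A)(\mathrm{id}_B\otimes\sigma_{A,C})(\sigma_{A,B}\otimes\mathrm{id}_C)$ and the hexagon identities $\sigma_{A\otimes B,C}=(\sigma_{A,C}\otimes\mathrm{id}_B)(\mathrm{id}_A\otimes\sigma_{B,C})$, $\sigma_{C,A\otimes B}=(\mathrm{id}_A\otimes\sigma_{C,B})(\sigma_{C,A}\otimes\mathrm{id}_B)$, but not necessarily natural. A braiding is a pre-braiding that is natural: $(g\otimes f)\circ\sigma_{A,B}=\sigma_{A',B'}\circ(f\otimes g)$ for all morphisms $f\colon A\to A'$, $g\colon B\to B'$. $\mathcal{C}_\sigma$ has the same objects as $\mathcal{C}$, and $f\in\mathrm{Hom}_\mathcal{C}(A,B)$ is a morphism of $\mathcal{C}_\sigma$ iff $\sigma_{B,C}\circ(f\otimes\mathrm{id}_C)=(\mathrm{id}_C\otimes f)\circ\sigma_{A,C}$ and $(f\otimes\mathrm{id}_C)\circ\sigma_{C,A}=\sigma_{C,B}\circ(\mathrm{id}_C\otimes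 f)$ for all $C\in\mathrm{Ob}\,\mathcal{C}$. *)

(* A (small) category is presented in single-sorted form: a type of objects,
   a type of all morphisms with domain/codomain maps, identities and a
   composition [comp f g] = f ∘ g (only constrained when cod g = dom f).
   This lets strictness (A⊗B)⊗C = A⊗(B⊗C), (f⊗g)⊗h = f⊗(g⊗h) be stated as
   plain equalities without transport. *)

Record StrictMonoidalCategory := {
  Obj : Type;
  Mor : Type;
  dom : Mor -> Obj;
  cod : Mor -> Obj;
  idm : Obj -> Mor;
  comp : Mor -> Mor -> Mor;
  tobj : Obj -> Obj -> Obj;
  tmor : Mor -> Mor -> Mor;
  unit : Obj;
  dom_id : forall A, dom (idm A) = A;
  cod_id : forall A, cod (idm A) = A;
  dom_comp : forall f g, cod g = dom f -> dom (comp f g) = dom g;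
  cod_comp : forall f g, cod g = dom f -> cod (comp f g) = cod f;
  comp_id_l : forall f, comp (idm (cod f)) f = f;
  comp_id_r : forall f, comp f (idm (dom f)) = f;
  comp_assoc : forall f g h, cod h = dom g -> cod g = dom f ->
      comp f (comp g h) = comp (comp f g) h;
  dom_tmor : forall f g, dom (tmor f g) = tobj (dom f) (dom g);
  cod_tmor : forall f g, cod (tmor f g) = tobj (cod f) (cod g);
  tmor_id : forall A B, tmor (idm A) (idm B) = idm (tobj A B);
  tmor_comp : forall f f' g g', cod f' = dom f -> cod g' = dom g ->
      tmor (comp f f') (comp g g') = comp (tmor f g) (tmor f' g');
  tobj_assoc : forall A B C, tobj (tobj A B) C = tobj A (tobj B C);
  tmor_assoc : forall f g h, tmor (tmor f g) h = tmor f (tmor g h);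
  tobj_unit_l : forall A, tobj unit A = A;
  tobj_unit_r : forall A, tobj A unit = A;
  tmor_unit_l : forall f, tmor (idm unit) f = f;
  tmor_unit_r : forall f, tmor f (idm unit) = f
}.

Arguments dom {_}. Arguments cod {_}. Arguments idm {_}. Arguments comp {_}.
Arguments tobj {_}. Arguments tmor {_}. Arguments unit {_}.

Section Braid.
Variable C : StrictMonoidalCategory.

(* Pre-braiding: family of morphisms σ_{A,B} : A⊗B -> B⊗A satisfying
   Yang–Baxter and the two hexagon identities (not necessarily natural). *)
Definition is_prebraiding (s : Obj C -> Obj C -> Mor C) : Prop :=
  (forall A B, dom (s A B) = tobj A B /\ cod (s A B) = tobj B A) /\
  (forall A B D,
     comp (tmor (idm D) (s A B)) (comp (tmor (s A D) (idm B)) (tmor (idm A) (s B D)))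
     = comp (tmor (s B D) (idm A)) (comp (tmor (idm B) (s A D)) (tmor (s A B) (idm D)))) /\
  (forall A B D, s (tobj A B) D = comp (tmor (s A D) (idm B)) (tmor (idm A) (s B D))) /\
  (forall A B D, s D (tobj A B) = comp (tmor (idm A) (s D B)) (tmor (s D A) (idm B))).

Definition natural_on (P : Mor C -> Prop) (s : Obj C -> Obj C -> Mor C) : Prop :=
  forall f g, P f -> P g ->
    comp (tmor g f) (s (dom f) (dom g)) = comp (s (cod f) (cod g)) (tmor f g).

Definition in_Csigma (s : Obj C -> Obj C -> Mor C) (f : Mor C) : Prop :=
  forall D : Obj C,
    comp (s (cod f) D) (tmor f (idm D)) = comp (tmor (idm D) f) (s (dom f) D) /\
    comp (tmor f (idm D)) (s D (dom f)) = comp (s D (cod f)) (tmor (idm D) f).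

(* P (a class of morphisms, with all objects) forms a subcategory. *)
Definition is_subcategory (P : Mor C -> Prop) : Prop :=
  (forall A, P (idm A)) /\
  (forall f g, cod g = dom f -> P f -> P g -> P (comp f g)).

(* ... a (strict) monoidal subcategory: closed under ⊗ of morphisms
   (it contains all objects, in particular the unit, and inherits the
   strict associativity / unit laws). *)
Definition is_monoidal_subcategory (P : Mor C -> Prop) : Prop :=
  is_subcategory P /\ (forall f g, P f -> P g -> P (tmor f g)).

Definition is_braided_monoidal_subcategory (P : Mor C -> Prop)
    (s : Obj C -> Obj C -> Mor C) : Prop :=
  is_monoidal_subcategory P /\
  (forall A B, P (s A B)) /\
  is_prebraiding s /\
  natural_on P s.

End Braid.


(* Naturality of
   σ_{D,-} in C is naturality of σ^rev_{-,D} in the category C^rev with the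
   reversed tensor product, where σ^rev_{A,B} = σ_{B,A} is again a
   pre-braiding; so it suffices to study σ_{-,D}.  The morphisms at which
   σ_{-,D} is natural are closed under composition; the hexagon identity
   σ_{A⊗B,D} = (σ_{A,D} ⊗ 1)(1 ⊗ σ_{B,D}) makes them closed under f ↦ f ⊗ 1
   and f ↦ 1 ⊗ f, hence under ⊗; and the Yang–Baxter equation is exactly
   naturality of σ_{-,D} at σ_{A,B}.  Finally σ is natural on C_σ: write
   f ⊗ g as (f ⊗ 1)(1 ⊗ g) and move g, then f, across σ. *)

Arguments dom_comp {_}. Arguments cod_comp {_}. Arguments comp_assoc {_}.
Arguments tmor_comp {_}. Arguments tmor_id {_}. Arguments tmor_assoc {_}.

Lemma prebraiding_dom {C} {s : Obj C -> Obj C -> Mor C} :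
  is_prebraiding C s -> forall A B, dom (s A B) = tobj A B.
Proof. intros Hs A B. apply Hs. Qed.

Lemma prebraiding_cod {C} {s : Obj C -> Obj C -> Mor C} :
  is_prebraiding C s -> forall A B, cod (s A B) = tobj B A.
Proof. intros Hs A B. apply Hs. Qed.

Ltac solve_dom_cod :=
  repeat match goal with
  | |- context [dom (comp ?f ?g)] => rewrite (dom_comp f g) by solve_dom_cod
  | |- context [cod (comp ?f ?g)] => rewrite (cod_comp f g) by solve_dom_cod
  | |- context [dom (tmor _ _)] => rewrite dom_tmor
  | |- context [cod (tmor _ _)] => rewrite cod_tmor
  | |- context [dom (idm _)] => rewrite dom_id
  | |- context [cod (idm _)] => rewrite cod_id
  | H : is_prebraiding _ ?s |- context [dom (?s _ _)] => rewrite (prebraiding_dom H)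
  | H : is_prebraiding _ ?s |- context [cod (?s _ _)] => rewrite (prebraiding_cod H)
  end; rewrite ?tobj_assoc; first [reflexivity | assumption | congruence].

Section StrictMonoidal.
Context {C : StrictMonoidalCategory}.
Implicit Types (f g : Mor C) (A B D : Obj C).

Lemma comp_idl f A : cod f = A -> comp (idm A) f = f.
Proof. intros <-. apply comp_id_l. Qed.

Lemma comp_idr f A : dom f = A -> comp f (idm A) = f.
Proof. intros <-. apply comp_id_r. Qed.

Lemma tmor_comp_idr f g D : cod g = dom f ->
  tmor (comp f g) (idm D) = comp (tmor f (idm D)) (tmor g (idm D)).
Proof.
  intros. rewrite <- tmor_comp by solve_dom_cod.
  now rewrite comp_idl by solve_dom_cod.
Qed.

Lemma tmor_comp_idl f g D : cod g = dom f ->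
  tmor (idm D) (comp f g) = comp (tmor (idm D) f) (tmor (idm D) g).
Proof.
  intros. rewrite <- tmor_comp by solve_dom_cod.
  now rewrite comp_idl by solve_dom_cod.
Qed.

Lemma tmor_split_l f g A B : dom f = A -> cod g = B ->
  tmor f g = comp (tmor f (idm B)) (tmor (idm A) g).
Proof.
  intros. rewrite <- tmor_comp by solve_dom_cod.
  now rewrite comp_idr, comp_idl by solve_dom_cod.
Qed.

Lemma tmor_split_r f g A B : cod f = B -> dom g = A ->
  tmor f g = comp (tmor (idm B) g) (tmor f (idm A)).
Proof.
  intros. rewrite <- tmor_comp by solve_dom_cod.
  now rewrite comp_idr, comp_idl by solve_dom_cod.
Qed.

End StrictMonoidal.

Definition rev_tensor (C : StrictMonoidalCategory) : StrictMonoidalCategory := {|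
  Obj := Obj C; Mor := Mor C;
  dom := dom; cod := cod; idm := idm; comp := comp;
  tobj A B := tobj B A; tmor f g := tmor g f; unit := unit;
  dom_id := dom_id C; cod_id := cod_id C;
  dom_comp := dom_comp; cod_comp := cod_comp;
  comp_id_l := comp_id_l C; comp_id_r := comp_id_r C; comp_assoc := comp_assoc;
  dom_tmor f g := dom_tmor C g f; cod_tmor f g := cod_tmor C g f;
  tmor_id A B := tmor_id B A;
  tmor_comp f f' g g' Hf Hg := tmor_comp g g' f f' Hg Hf;
  tobj_assoc A B D := eq_sym (tobj_assoc C D B A);
  tmor_assoc f g h := eq_sym (tmor_assoc h g f);
  tobj_unit_l := tobj_unit_r C; tobj_unit_r := tobj_unit_l C;
  tmor_unit_l := tmor_unit_r C; tmor_unit_r := tmor_unit_l C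
|}.

Definition rev_braiding {C} (s : Obj C -> Obj C -> Mor C) :
  Obj (rev_tensor C) -> Obj (rev_tensor C) -> Mor (rev_tensor C) :=
  fun A B => s B A.

Lemma prebraiding_rev_tensor {C} {s : Obj C -> Obj C -> Mor C} :
  is_prebraiding C s -> is_prebraiding (rev_tensor C) (rev_braiding s).
Proof.
  intros (s_dom_cod & yang_baxter & hexagon_l & hexagon_r).
  unfold rev_braiding. split; [|split; [|split]]; simpl.
  - intros A B. destruct (s_dom_cod B A). now split.
  - intros A B D. symmetry. apply yang_baxter.
  - intros A B D. apply hexagon_r.
  - intros A B D. apply hexagon_l.
Qed.

Definition natural_fst {C} (s : Obj C -> Obj C -> Mor C) D f : Prop :=
  comp (s (cod f) D) (tmor f (idm D)) = comp (tmor (idm D) f) (s (dom f) D).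

Section NaturalFst.
Context {C : StrictMonoidalCategory} {s : Obj C -> Obj C -> Mor C}.
Hypothesis s_prebraiding : is_prebraiding C s.
Variable D : Obj C.
Implicit Types (f g : Mor C) (A B : Obj C).

Let hexagon_l A B :
  s (tobj A B) D = comp (tmor (s A D) (idm B)) (tmor (idm A) (s B D)).
Proof. apply s_prebraiding. Qed.

Lemma natural_fst_idm A : natural_fst s D (idm A).
Proof.
  unfold natural_fst. rewrite dom_id, cod_id, !tmor_id.
  now rewrite comp_idr, comp_idl by solve_dom_cod.
Qed.

Lemma natural_fst_comp f g : cod g = dom f ->
  natural_fst s D f -> natural_fst s D g -> natural_fst s D (comp f g).
Proof.
  unfold natural_fst. intros Hfg Hf Hg.
  rewrite (cod_comp f g), (dom_comp f g), tmor_comp_idr, tmor_comp_idl by assumption.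
  rewrite comp_assoc, Hf by solve_dom_cod.
  now rewrite <- !comp_assoc, <- Hfg, Hg by solve_dom_cod.
Qed.

Lemma natural_fst_tmor_idr f B :
  natural_fst s D f -> natural_fst s D (tmor f (idm B)).
Proof.
  unfold natural_fst. intros Hf.
  rewrite dom_tmor, cod_tmor, dom_id, cod_id, !hexagon_l, tmor_assoc, tmor_id.
  rewrite <- comp_assoc, <- (tmor_split_r f (s B D)) by solve_dom_cod.
  rewrite (tmor_split_l f (s B D) (dom f) (tobj D B)) by solve_dom_cod.
  rewrite <- (tmor_id D B), <- tmor_assoc, comp_assoc by solve_dom_cod.
  rewrite <- tmor_comp_idr, Hf, tmor_comp_idr by solve_dom_cod.
  now rewrite tmor_assoc, <- comp_assoc by solve_dom_cod.
Qed.

Lemma natural_fst_tmor_idl A g :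
  natural_fst s D g -> natural_fst s D (tmor (idm A) g).
Proof.
  unfold natural_fst. intros Hg.
  rewrite dom_tmor, cod_tmor, dom_id, cod_id, !hexagon_l, tmor_assoc.
  rewrite <- comp_assoc, <- tmor_comp_idl, Hg, tmor_comp_idl by solve_dom_cod.
  rewrite comp_assoc, <- tmor_assoc, tmor_id by solve_dom_cod.
  rewrite <- (tmor_split_l (s A D) g) by solve_dom_cod.
  rewrite (tmor_split_r (s A D) g (dom g) (tobj D A)) by solve_dom_cod.
  now rewrite <- tmor_assoc, tmor_id, <- comp_assoc by solve_dom_cod.
Qed.

Lemma natural_fst_tmor f g :
  natural_fst s D f -> natural_fst s D g -> natural_fst s D (tmor f g).
Proof.
  intros Hf Hg. rewrite (tmor_split_l f g (dom f) (cod g)) by reflexivity.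
  apply natural_fst_comp; [solve_dom_cod | |].
  - now apply natural_fst_tmor_idr.
  - now apply natural_fst_tmor_idl.
Qed.

Lemma natural_fst_prebraiding A B : natural_fst s D (s A B).
Proof.
  unfold natural_fst.
  rewrite (prebraiding_dom s_prebraiding), (prebraiding_cod s_prebraiding), !hexagon_l.
  rewrite <- comp_assoc by solve_dom_cod.
  symmetry. apply s_prebraiding.
Qed.

End NaturalFst.

Section Csigma.
Variables (C : StrictMonoidalCategory) (s : Obj C -> Obj C -> Mor C).
Hypothesis s_prebraiding : is_prebraiding C s.
Let s_rev_prebraiding := prebraiding_rev_tensor s_prebraiding.

Lemma in_Csigma_natural f : in_Csigma C s f ->
  forall D, natural_fst s D f /\ natural_fst (rev_braiding s) D f.
Proof. intros Hf D. destruct (Hf D). split; [assumption | now symmetry]. Qed.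

Lemma natural_in_Csigma f :
  (forall D, natural_fst s D f /\ natural_fst (rev_braiding s) D f) ->
  in_Csigma C s f.
Proof. intros Hf D. destruct (Hf D). split; [assumption | now symmetry]. Qed.

Lemma Csigma_idm A : in_Csigma C s (idm A).
Proof.
  apply natural_in_Csigma. intros D. split.
  - apply (natural_fst_idm s_prebraiding).
  - apply (natural_fst_idm s_rev_prebraiding).
Qed.

Lemma Csigma_comp f g : cod g = dom f ->
  in_Csigma C s f -> in_Csigma C s g -> in_Csigma C s (comp f g).
Proof.
  intros Hfg Hf Hg. apply natural_in_Csigma. intros D.
  destruct (in_Csigma_natural _ Hf D), (in_Csigma_natural _ Hg D). split.
  - now apply (natural_fst_comp s_prebraiding).
  - now apply (natural_fst_comp s_rev_prebraiding).
Qed.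

Lemma Csigma_tmor f g :
  in_Csigma C s f -> in_Csigma C s g -> in_Csigma C s (tmor f g).
Proof.
  intros Hf Hg. apply natural_in_Csigma. intros D.
  destruct (in_Csigma_natural _ Hf D), (in_Csigma_natural _ Hg D). split.
  - now apply (natural_fst_tmor s_prebraiding).
  - now apply (natural_fst_tmor s_rev_prebraiding).
Qed.

Lemma Csigma_prebraiding A B : in_Csigma C s (s A B).
Proof.
  apply natural_in_Csigma. intros D. split.
  - apply (natural_fst_prebraiding s_prebraiding).
  - apply (natural_fst_prebraiding s_rev_prebraiding D B A).
Qed.

Lemma prebraiding_natural_on_Csigma : natural_on C (in_Csigma C s) s.
Proof.
  intros f g Hf Hg.
  destruct (Hf (cod g)) as [Hf_fst _], (Hg (dom f)) as [_ Hg_snd].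
  rewrite (tmor_split_r g f (dom f) (cod g)) by reflexivity.
  rewrite <- comp_assoc, Hg_snd, comp_assoc, <- Hf_fst by solve_dom_cod.
  now rewrite <- comp_assoc, <- tmor_split_l by solve_dom_cod.
Qed.

End Csigma.

Theorem proposition5p9 (C : StrictMonoidalCategory)
    (s : Obj C -> Obj C -> Mor C) (Hs : is_prebraiding C s) :
  is_braided_monoidal_subcategory C (in_Csigma C s) s.
Proof.
  split; [split; [split|] | split; [|split]].
  - intros A. now apply Csigma_idm.
  - intros f g. now apply Csigma_comp.
  - intros f g. now apply Csigma_tmor.
  - intros A B. now apply Csigma_prebraiding.
  - exact Hs.
  - now apply prebraiding_natural_on_Csigma.
Qed.
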